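(* Let $K:=F'_x+p\,F'_y$. For every polynomial $r(x,y,p)=\sum_{j} r_j(x,y)p^j$ in $p$ with coefficients holomorphic on $U$, the following equality of holomorphic $2$-forms holds on the surface $S$ (i.e. after restriction to $S$): $$d\Bigl(\frac{r(x,y,p)}{F'_p(x,y,p)}(dy-p\,dx)\Bigr)=\Bigl((r'_x+p\,r'_y)-\Bigl(\frac{K}{F'_p}\Bigr)'_p\, r-\frac{K}{F'_p}\,r'_p\Bigr)\frac{dx\wedge dy}{F'_p}.$$
   Context: Let $d\ge 3$, let $U\subset\mathbb{C}^2$ be open with coordinates $(x,y)$, and let $F(x,y,p)=\sum_{i=0}^d a_i(x,y)p^{d-i}$ with $a_i$ holomorphic on $U$ and $a_0\equiv 1$, such that for every $(x,y)\in U$ the $d$ roots in $p$ of $F(x,y,p)$ are pairwise distinct (so $F$ and $F'_p$ have no common zero). Let $S\subset U\times\mathbb{C}$ be the surface $\{F(x,y,p)=0\}$ (on which $F'_p\neq 0$). Subscripts $'_x,'_y,'_p$ denote partial derivatives with respect to $x,y,p$. *)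

(* The complex plane is  R[i]^o  for  R : realType
   (complex numbers of mathcomp-real-closed, viewed as a normed module over
   themselves), so that [differentiable] on C*C means complex (Frechet)
   differentiability, i.e. holomorphy, and [derive1] is the complex derivative. *)
From HB Require Import structures.
From mathcomp Require Import all_boot all_order all_algebra.
From mathcomp Require Import all_classical all_reals all_analysis.
From mathcomp Require Import complex.
Set Implicit Arguments. Unset Strict Implicit. Unset Printing Implicit Defensive.
Import Order.TTheory GRing.Theory Num.Theory.
Import numFieldNormedType.Exports.
Local Open Scope ring_scope.
Local Open Scope classical_set_scope.

Notation CC R := ((R[i])^o).

Section Defs.
Variable R : realType.
Local Notation C := (CC R).

Definition holomorphic_on (U : set (C * C)) (f : C -> C -> C) : Prop :=
  forall z, U z -> differentiable (fun w : C * C => f w.1 w.2) z.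

Definition pdx3 (f : C -> C -> C -> C) (x y p : C) : C :=
  derive1 (fun t : C => f t y p) x.
Definition pdy3 (f : C -> C -> C -> C) (x y p : C) : C :=
  derive1 (fun t : C => f x t p) y.
Definition pdp3 (f : C -> C -> C -> C) (x y p : C) : C :=
  derive1 (fun t : C => f x y t) p.

Definition pdx2 (g : C -> C -> C) (x y : C) : C := derive1 (fun t : C => g t y) x.
Definition pdy2 (g : C -> C -> C) (x y : C) : C := derive1 (fun t : C => g x t) y.

Definition polyF (d : nat) (a : nat -> C -> C -> C) (x y p : C) : C :=
  \sum_(i < d.+1) a i x y * p ^+ (d - i).

Definition polyr (n : nat) (rc : nat -> C -> C -> C) (x y p : C) : C :=
  \sum_(j < n) rc j x y * p ^+ j.

Definition Kfun (F : C -> C -> C -> C) (x y p : C) : C :=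
  pdx3 F x y p + p * pdy3 F x y p.

Definition KoverFp (F : C -> C -> C -> C) (x y p : C) : C :=
  Kfun F x y p / pdp3 F x y p.

(* Differential forms on S are handled through the local charts of S given by
   graphs  (x,y) |-> (x,y,phi(x,y))  (S is covered by such charts since
   F'_p <> 0 on S).  A 1-form  P dx + Q dy (+ 0 dp) in the ambient space
   pulls back along the graph of phi to  P(x,y,phi) dx + Q(x,y,phi) dy.
   [dcoef P Q] is the coefficient of dx/\dy in d(P dx + Q dy). *)
Definition restr (phi : C -> C -> C) (f : C -> C -> C -> C) (x y : C) : C :=
  f x y (phi x y).

Definition dcoef (P Q : C -> C -> C) (x y : C) : C :=
  pdx2 Q x y - pdy2 P x y.

(* the 1-form  (r/F'_p)(dy - p dx) = P dx + Q dy  with *)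
Definition omegaP (F r : C -> C -> C -> C) (x y p : C) : C :=
  - (r x y p / pdp3 F x y p) * p.
Definition omegaQ (F r : C -> C -> C -> C) (x y p : C) : C :=
  r x y p / pdp3 F x y p.

Definition rhs_coef (F r : C -> C -> C -> C) (x y p : C) : C :=
  ((pdx3 r x y p + p * pdy3 r x y p)
   - pdp3 (KoverFp F) x y p * r x y p
   - KoverFp F x y p * pdp3 r x y p) / pdp3 F x y p.

End Defs.

From HB Require Import structures.
From mathcomp Require Import all_boot all_order all_algebra.
From mathcomp Require Import all_classical all_reals all_analysis.
From mathcomp Require Import complex.
From mathcomp Require Import ring.
Import Order.TTheory GRing.Theory Num.Theory.
Import numFieldNormedType.Exports.
Local Open Scope ring_scope.
Local Open Scope classical_set_scope.

(* On a chart p = phi(x,y) of S, the restriction of a function f(x,y,p) has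
   partial derivatives f'_x + f'_p phi'_x and f'_y + f'_p phi'_y, and
   differentiating F(x,y,phi) = 0 gives F'_x = - F'_p phi'_x and
   F'_y = - F'_p phi'_y.  Expanding d((r/F'_p)(dy - p dx)) by the quotient
   rule and (K/F'_p)'_p likewise, the only further input is the symmetry
   (F'_x)'_p = (F'_p)'_x, (F'_y)'_p = (F'_p)'_y, which holds because F is a
   polynomial in p with holomorphic coefficients; after these substitutions
   the two sides agree as rational expressions. *)

Lemma dcoef_omega_identity {K : fieldType}
    {q phx phy Fx Fy Fp Fpx Fpy Fpp r rx ry rp : K} :
  Fp != 0 -> Fx + Fp * phx = 0 -> Fy + Fp * phy = 0 ->
  ((rx + rp * phx) * Fp - r * (Fpx + Fpp * phx)) / Fp ^+ 2
  - (- (((ry + rp * phy) * Fp - r * (Fpy + Fpp * phy)) / Fp ^+ 2) * q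
     + - (r / Fp) * phy)
  = (rx + q * ry
     - ((Fpx + (Fy + q * Fpy)) * Fp - (Fx + q * Fy) * Fpp) / Fp ^+ 2 * r
     - (Fx + q * Fy) / Fp * rp) / Fp.
Proof.
move=> Fp0 /eqP; rewrite addr_eq0 => /eqP-> /eqP; rewrite addr_eq0 => /eqP->.
by field.
Qed.

Section OneVariable.
Context {R : realType}.
Local Notation C := (CC R).
Implicit Types (f g B : C -> C) (t df dg db : C).

Lemma derive1_is_derive {f t} : derivable f t 1 -> is_derive t 1 f (derive1 f t).
Proof. by rewrite derive1E; exact: derivableP. Qed.

Lemma derive1_val {f t df} : is_derive t 1 f df -> derive1 f t = df.
Proof. by move=> fdf; rewrite derive1E derive_val. Qed.

Lemma is_derive_oppf {f t df} :
  is_derive t 1 f df -> is_derive t 1 (fun s => - f s) (- df).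
Proof. by move=> fdf; change (is_derive t 1 (- f) (- df)); exact: is_deriveN. Qed.

Lemma is_derive_addf {f g t df dg} :
  is_derive t 1 f df -> is_derive t 1 g dg ->
  is_derive t 1 (fun s => f s + g s) (df + dg).
Proof.
by move=> fdf gdg; change (is_derive t 1 (f + g) (df + dg)); exact: is_deriveD.
Qed.

Lemma is_derive_mulf {f g t df dg} :
  is_derive t 1 f df -> is_derive t 1 g dg ->
  is_derive t 1 (fun s => f s * g s) (df * g t + f t * dg).
Proof.
move=> fdf gdg; change (is_derive t 1 (f * g) (df * g t + f t * dg)).
apply: is_derive_eq (is_deriveM fdf gdg) _.
by rewrite /GRing.scale /= addrC mulrC.
Qed.

Lemma is_derive_divf {f g t df dg} :
  is_derive t 1 f df -> is_derive t 1 g dg -> g t != 0 ->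
  is_derive t 1 (fun s => f s / g s) ((df * g t - f t * dg) / g t ^+ 2).
Proof.
move=> fdf gdg gt0.
have ginv : is_derive t 1 (fun s : C => (g s)^-1) (- (g t) ^- 2 * dg).
  apply: DeriveDef; first exact: derivableV.
  by rewrite deriveV // derive_val.
eapply is_derive_eq; first exact: is_derive_mulf fdf ginv.
(* [field] must see this equation in [C], not in its normed-module view. *)
have quot : df / g t + f t * (- g t ^- 2 * dg)
             = (df * g t - f t * dg) / g t ^+ 2 :> C.
  by field.
exact: quot.
Qed.

Lemma is_derive_near0 {f t df} :
  (\forall s \near t, f s = 0) -> is_derive t 1 f df -> df = 0.
Proof.
move=> f0 fdf; have : is_derive t 1 (cst 0) df.
  by apply: near_eq_is_derive fdf; apply: filterS f0 => s ->.
by case=> _; rewrite derive_cst.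
Qed.

Lemma is_derive_sum_mul_exp m (c : nat -> C -> C) (dc : nat -> C)
    (e : nat -> nat) B t db :
  (forall i, (i < m)%N -> is_derive t 1 (c i) (dc i)) -> is_derive t 1 B db ->
  is_derive t 1 (fun s => \sum_(i < m) c i s * B s ^+ e i)
    (\sum_(i < m) dc i * B t ^+ e i
     + (\sum_(i < m) c i t * ((e i)%:R * B t ^+ (e i).-1)) * db).
Proof.
move=> cdc Bdb.
have -> : (fun s => \sum_(i < m) c i s * B s ^+ e i) =
          \sum_(i < m) (c i * B ^+ e i).
  by apply/funext => s; rewrite fct_sumE; apply: eq_bigr => i _; rewrite exprfctE.
apply: is_derive_eq.
  exact: is_derive_sum
    (fun i => is_deriveM (cdc i (ltn_ord i)) (is_deriveX _ Bdb)).
rewrite big_split /= addrC mulr_suml; congr (_ + _); apply: eq_bigr => i _.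
  by rewrite exprfctE /GRing.scale /= mulrC.
by rewrite /GRing.scale /= mulrA.
Qed.

End OneVariable.

Section Ppoly.
Context {R : realType}.
Local Notation C := (CC R).

(* A polynomial in p with coefficients c_i(x,y); the exponent map e lets
   polyF (e i = d - i), polyr (e = id) and all their p-derivatives be
   instances without reindexing. *)
Definition ppoly (m : nat) (c : nat -> C -> C -> C) (e : nat -> nat)
    (x y p : C) : C :=
  \sum_(i < m) c i x y * p ^+ e i.

Implicit Types (m : nat) (c : nat -> C -> C -> C) (e : nat -> nat) (x y q : C).

Lemma is_derive_mulr_const {f : C -> C} {t df : C} (k : C) :
  is_derive t 1 f df -> is_derive t 1 (fun s => f s * k) (df * k).
Proof.
move=> fdf; eapply is_derive_eq.
  exact: is_derive_mulf fdf (is_derive_cst k t 1).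
by rewrite mulr0 addr0.
Qed.

Lemma derivable_mulr_const {f : C -> C} {t : C} (k : C) :
  derivable f t 1 -> derivable (fun s => f s * k) t 1.
Proof. by move=> /derive1_is_derive /(is_derive_mulr_const k) []. Qed.

Lemma is_derive_ppoly_p m c e x y q :
  is_derive q 1 (ppoly m c e x y)
    (ppoly m (fun i s t => c i s t * (e i)%:R) (fun i => (e i).-1) x y q).
Proof.
apply: is_derive_eq.
  exact: (is_derive_sum_mul_exp _ (fun i _ => c i x y) (fun=> 0) e _ _ _
            (fun i _ => is_derive_cst _ _ _) (is_derive_id q 1)).
rewrite big1 ?add0r ?mulr1 => [|i _]; last by rewrite mul0r.
by apply: eq_bigr => i _; rewrite mulrA.
Qed.

Lemma pdp3_ppoly m c e :
  pdp3 (ppoly m c e) =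
  ppoly m (fun i s t => c i s t * (e i)%:R) (fun i => (e i).-1).
Proof.
by apply/funext => x; apply/funext => y; apply/funext => q;
  exact: derive1_val (is_derive_ppoly_p _ _ _ _ _ _).
Qed.

Lemma derivable_ppoly_p m c e x y q : derivable (ppoly m c e x y) q 1.
Proof. by have [] := is_derive_ppoly_p m c e x y q. Qed.

Section PartialX.
Variables (m : nat) (c : nat -> C -> C -> C) (e : nat -> nat) (x y : C).
Hypothesis hc : forall i, (i < m)%N -> derivable (fun t => c i t y) x 1.

Lemma pdx3_ppoly : pdx3 (ppoly m c e) x y = ppoly m (fun i => pdx2 (c i)) e x y.
Proof.
apply/funext => q; apply: derive1_val; rewrite /ppoly; apply: is_derive_eq.
  exact: (is_derive_sum_mul_exp _ (fun i t => c i t y) _ e (cst q) _ _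
            (fun i hi => derive1_is_derive (hc _ hi)) (is_derive_cst q x 1)).
by rewrite mulr0 addr0.
Qed.

Lemma is_derive_ppoly_graph_x (phi : C -> C -> C) :
  derivable (fun t => phi t y) x 1 ->
  is_derive x 1 (fun t => ppoly m c e t y (phi t y))
    (pdx3 (ppoly m c e) x y (phi x y)
     + pdp3 (ppoly m c e) x y (phi x y) * pdx2 phi x y).
Proof.
move=> hphi; rewrite pdx3_ppoly pdp3_ppoly; apply: is_derive_eq.
  exact: is_derive_sum_mul_exp (fun i hi => derive1_is_derive (hc _ hi))
           (derive1_is_derive hphi).
by congr (_ + _ * _); apply: eq_bigr => i _; rewrite mulrA.
Qed.

End PartialX.

Lemma pdp3_pdx3_ppoly m c e x y q :
  (forall i, (i < m)%N -> derivable (fun t => c i t y) x 1) ->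
  pdp3 (pdx3 (ppoly m c e)) x y q = pdx3 (pdp3 (ppoly m c e)) x y q.
Proof.
move=> hc; have hce i : (i < m)%N -> derivable (fun t => c i t y * (e i)%:R) x 1.
  by move=> hi; exact/derivable_mulr_const/hc.
rewrite [pdp3 _ x y q]/pdp3 (pdx3_ppoly _ _ _ _ _ hc) -/(pdp3 _ x y q).
rewrite !pdp3_ppoly.
rewrite (pdx3_ppoly _ _ _ _ _ hce); apply: eq_bigr => i _.
by rewrite /pdx2 derive1Mr //; exact: hc.
Qed.

Lemma pdy3_ppoly m c e x y :
  (forall i, (i < m)%N -> derivable (fun t => c i x t) y 1) ->
  pdy3 (ppoly m c e) x y = ppoly m (fun i => pdy2 (c i)) e x y.
Proof. exact: (pdx3_ppoly m (fun i s t => c i t s) e y x). Qed.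

Lemma is_derive_ppoly_graph_y m c e x y (phi : C -> C -> C) :
  (forall i, (i < m)%N -> derivable (fun t => c i x t) y 1) ->
  derivable (fun t => phi x t) y 1 ->
  is_derive y 1 (fun t => ppoly m c e x t (phi x t))
    (pdy3 (ppoly m c e) x y (phi x y)
     + pdp3 (ppoly m c e) x y (phi x y) * pdy2 phi x y).
Proof.
move=> hc hphi.
exact: (is_derive_ppoly_graph_x m (fun i s t => c i t s) e y x hc
         (fun s t => phi t s)).
Qed.

Lemma pdp3_pdy3_ppoly m c e x y q :
  (forall i, (i < m)%N -> derivable (fun t => c i x t) y 1) ->
  pdp3 (pdy3 (ppoly m c e)) x y q = pdy3 (pdp3 (ppoly m c e)) x y q.
Proof. exact: (pdp3_pdx3_ppoly m (fun i s t => c i t s) e y x q). Qed.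

End Ppoly.

Section Holomorphic.
Context {R : realType}.
Local Notation C := (CC R).
Implicit Types (U : set (C * C)) (h : C -> C -> C) (x y : C).

Lemma holomorphic_on_derivable_x {U h x y} :
  holomorphic_on U h -> U (x, y) -> derivable (fun t => h t y) x 1.
Proof.
move=> hh Uxy.
apply: (@diff_derivable _ _ _ ((fun w : C * C => h w.1 w.2) \o pair^~ y)).
by apply: differentiable_comp; [exact: differentiable_pair | exact: hh].
Qed.

Lemma holomorphic_on_derivable_y {U h x y} :
  holomorphic_on U h -> U (x, y) -> derivable (fun t => h x t) y 1.
Proof.
move=> hh Uxy.
apply: (@diff_derivable _ _ _ ((fun w : C * C => h w.1 w.2) \o pair x)).
by apply: differentiable_comp; [exact: differentiable_pair | exact: hh].
Qed.

Lemma open_near_slice_x {U x y} :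
  open U -> U (x, y) -> \forall t \near x, U (t, y).
Proof.
move=> oU Uxy; have : {for x, continuous (pair^~ y : C -> C * C)}.
  exact/differentiable_continuous/differentiable_pair.
by apply; exact: open_nbhs_nbhs.
Qed.

Lemma open_near_slice_y {U x y} :
  open U -> U (x, y) -> \forall t \near y, U (x, t).
Proof.
move=> oU Uxy; have : {for y, continuous (pair x : C -> C * C)}.
  exact/differentiable_continuous/differentiable_pair.
by apply; exact: open_nbhs_nbhs.
Qed.

End Holomorphic.

Section Graph.
Context {R : realType}.
Local Notation C := (CC R).
Variables (U V : set (C * C)) (phi : C -> C -> C).
Hypotheses (hV : open V) (hVU : V `<=` U) (hphi : holomorphic_on V phi).
Variables (mF mr : nat) (cF cr : nat -> C -> C -> C) (eF er : nat -> nat).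
Hypothesis hcF : forall i, (i < mF)%N -> holomorphic_on U (cF i).
Hypothesis hcr : forall j, (j < mr)%N -> holomorphic_on U (cr j).
Local Notation F := (ppoly mF cF eF).
Local Notation r := (ppoly mr cr er).
Hypothesis hphiS : forall x y, V (x, y) -> F x y (phi x y) = 0.

Let hcF_x x y : U (x, y) ->
  forall i, (i < mF)%N -> derivable (fun t => cF i t y) x 1.
Proof. by move=> Uxy i hi; exact: holomorphic_on_derivable_x (hcF _ hi) Uxy. Qed.

Let hcF_y x y : U (x, y) ->
  forall i, (i < mF)%N -> derivable (fun t => cF i x t) y 1.
Proof. by move=> Uxy i hi; exact: holomorphic_on_derivable_y (hcF _ hi) Uxy. Qed.

Let hcr_x x y : U (x, y) ->
  forall j, (j < mr)%N -> derivable (fun t => cr j t y) x 1.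
Proof. by move=> Uxy j hj; exact: holomorphic_on_derivable_x (hcr _ hj) Uxy. Qed.

Let hcr_y x y : U (x, y) ->
  forall j, (j < mr)%N -> derivable (fun t => cr j x t) y 1.
Proof. by move=> Uxy j hj; exact: holomorphic_on_derivable_y (hcr _ hj) Uxy. Qed.

Lemma graph_implicit_x x y : V (x, y) ->
  pdx3 F x y (phi x y) + pdp3 F x y (phi x y) * pdx2 phi x y = 0.
Proof.
move=> Vxy; apply: (is_derive_near0 (f := fun t => F t y (phi t y)) (t := x)).
  by apply: filterS (open_near_slice_x hV Vxy) => t /hphiS.
apply: is_derive_ppoly_graph_x; first exact: hcF_x _ _ (hVU _ Vxy).
exact: holomorphic_on_derivable_x hphi Vxy.
Qed.

Lemma graph_implicit_y x y : V (x, y) ->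
  pdy3 F x y (phi x y) + pdp3 F x y (phi x y) * pdy2 phi x y = 0.
Proof.
move=> Vxy; apply: (is_derive_near0 (f := fun t => F x t (phi x t)) (t := y)).
  by apply: filterS (open_near_slice_y hV Vxy) => t /hphiS.
apply: is_derive_ppoly_graph_y; first exact: hcF_y _ _ (hVU _ Vxy).
exact: holomorphic_on_derivable_y hphi Vxy.
Qed.

Lemma pdp3_KoverFp x y q : U (x, y) -> pdp3 F x y q != 0 ->
  pdp3 (KoverFp F) x y q =
  ((pdx3 (pdp3 F) x y q + (pdy3 F x y q + q * pdy3 (pdp3 F) x y q))
     * pdp3 F x y q
   - (pdx3 F x y q + q * pdy3 F x y q) * pdp3 (pdp3 F) x y q)
  / pdp3 F x y q ^+ 2.
Proof.
move=> Uxy Fp0.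
have dFx : is_derive q 1 (pdx3 F x y) (pdp3 (pdx3 F) x y q).
  apply: derive1_is_derive; rewrite (pdx3_ppoly _ _ _ _ _ (hcF_x _ _ Uxy)).
  exact: derivable_ppoly_p.
have dFy : is_derive q 1 (pdy3 F x y) (pdp3 (pdy3 F) x y q).
  apply: derive1_is_derive; rewrite (pdy3_ppoly _ _ _ _ _ (hcF_y _ _ Uxy)).
  exact: derivable_ppoly_p.
have dFp : is_derive q 1 (pdp3 F x y) (pdp3 (pdp3 F) x y q).
  by apply: derive1_is_derive; rewrite pdp3_ppoly; exact: derivable_ppoly_p.
rewrite (pdp3_pdx3_ppoly mF cF eF x y q (hcF_x _ _ Uxy)) in dFx.
rewrite (pdp3_pdy3_ppoly mF cF eF x y q (hcF_y _ _ Uxy)) in dFy.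
have dK := is_derive_divf
  (is_derive_addf dFx (is_derive_mulf (is_derive_id q 1) dFy)) dFp Fp0.
by rewrite [pdp3 (KoverFp F) _ _ _]/pdp3 /KoverFp /Kfun (derive1_val dK) mul1r.
Qed.

Lemma dcoef_omega_graph x y : V (x, y) -> pdp3 F x y (phi x y) != 0 ->
  dcoef (restr phi (omegaP F r)) (restr phi (omegaQ F r)) x y =
  restr phi (rhs_coef F r) x y.
Proof.
move=> Vxy Fp0; have Uxy := hVU _ Vxy.
have phi_x := holomorphic_on_derivable_x hphi Vxy.
have phi_y := holomorphic_on_derivable_y hphi Vxy.
have cFe_x i : (i < mF)%N -> derivable (fun t => cF i t y * (eF i)%:R) x 1.
  by move=> hi; exact/derivable_mulr_const/hcF_x.
have cFe_y i : (i < mF)%N -> derivable (fun t => cF i x t * (eF i)%:R) y 1.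
  by move=> hi; exact/derivable_mulr_const/hcF_y.
have dr_x := is_derive_ppoly_graph_x mr cr er x y (hcr_x _ _ Uxy) phi phi_x.
have dr_y := is_derive_ppoly_graph_y mr cr er x y phi (hcr_y _ _ Uxy) phi_y.
have dFp_x := is_derive_ppoly_graph_x mF (fun i s t => cF i s t * (eF i)%:R)
  (fun i => (eF i).-1) x y cFe_x phi phi_x.
have dFp_y := is_derive_ppoly_graph_y mF (fun i s t => cF i s t * (eF i)%:R)
  (fun i => (eF i).-1) x y phi cFe_y phi_y.
rewrite -pdp3_ppoly in dFp_x dFp_y.
have dQ := is_derive_divf dr_x dFp_x Fp0.
have dP := is_derive_mulf (is_derive_oppf (is_derive_divf dr_y dFp_y Fp0))
  (derive1_is_derive phi_y).
rewrite /dcoef /pdx2 (derive1_val dQ) /pdy2 (derive1_val dP).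
rewrite /restr /rhs_coef (pdp3_KoverFp _ _ _ Uxy Fp0) /KoverFp /Kfun.
exact: dcoef_omega_identity Fp0 (graph_implicit_x _ _ Vxy)
  (graph_implicit_y _ _ Vxy).
Qed.

End Graph.

Theorem lemma1 (R : realType) (d : nat) (hd : (3 <= d)%N)
  (U : set (CC R * CC R)) (hU : open U)
  (a : nat -> CC R -> CC R -> CC R)
  (ha0 : forall x y, U (x, y) -> a 0%N x y = 1)
  (hahol : forall i, (i <= d)%N -> holomorphic_on U (a i))
  (hsimple : forall x y p, U (x, y) -> polyF d a x y p = 0 ->
               pdp3 (polyF d a) x y p != 0)
  (n : nat) (rc : nat -> CC R -> CC R -> CC R)
  (hrhol : forall j, (j < n)%N -> holomorphic_on U (rc j))
  (V : set (CC R * CC R)) (hV : open V) (hVU : V `<=` U)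
  (phi : CC R -> CC R -> CC R) (hphi : holomorphic_on V phi)
  (hphiS : forall x y, V (x, y) -> polyF d a x y (phi x y) = 0) :
  forall x y, V (x, y) ->
    dcoef (restr phi (omegaP (polyF d a) (polyr n rc)))
          (restr phi (omegaQ (polyF d a) (polyr n rc))) x y
    = restr phi (rhs_coef (polyF d a) (polyr n rc)) x y.
Proof.
move=> x y Vxy.
exact: (@dcoef_omega_graph R U V phi hV hVU hphi d.+1 n a rc
          (fun i => d - i)%N (fun j => j) hahol hrhol hphiS x y Vxy
          (hsimple _ _ _ (hVU _ Vxy) (hphiS _ _ Vxy))).
Qed.
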